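(* Suppose that the solution set of problem $\min_{\boldsymbol\lambda,\mathbf p,\boldsymbol\mu\in\mathbb{R}^{N_h}}\Phi_h(\boldsymbol\lambda,\mathbf p,\boldsymbol\mu)$ is non-empty and let $\mathbf z^*=(\boldsymbol\lambda^*,\mathbf p^*,\boldsymbol\mu^* )$ be a solution. Let $\{\mathbf z^k\}=\{(\boldsymbol\lambda^k,\mathbf p^k,\boldsymbol\mu^k)\}$ be the sequence generated by the discrete sGS-mABCD algorithm started from $\mathbf z^0=(\boldsymbol\lambda^0,\mathbf p^0,\boldsymbol\mu^0)$. Then $$\Phi_h(\mathbf z^k)-\Phi_h(\mathbf z^* )\le\frac{4\tau_h}{(k+1)^2}\quad\forall k\ge1,\qquad \tau_h=\tfrac12\|\mathbf z^0-\mathbf z^*\|_{\mathcal S_h}^2,$$ where $$\mathcal S_h=\frac1\alpha\begin{pmatrix}M_hG_h^{-1}M_h+W_h-M_h&0&0\\0&0&0\\0&0&\gamma M_hW_h^{-1}M_h\end{pmatrix},\qquad G_h=M_h+\alpha K_hM_h^{-1}K_h.$$ Moreover, the sequence $\{(\boldsymbol\lambda^k,\mathbf p^k,\boldsymbol\mu^k)\}$ is bounded.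
   Context: Setting: $\Omega\subset\mathbb{R}^n$, $n\in\{2,3\}$, convex bounded domain; $\{\mathcal T_h\}$ regular quasi-uniform triangulations with mesh size $h$; $Y_h$ the space of continuous piecewise linear functions on $\mathcal T_h$ vanishing outside $\Omega_h$, with nodal basis $\{\phi_i\}_{i=1}^{N_h}$. The bilinear form is $a(y,v)=\int_\Omega(\sum_{i,j}a_{ji}y_{x_i}v_{x_j}+c_0yv)\,dx$ with $a_{ij}=a_{ji}, c_0\in L^\infty$, $c_0\ge0$, uniformly elliptic. Matrices: stiffness $K_h=(a(\phi_i,\phi_j))_{i,j}$, mass $M_h=(\int_{\Omega_h}\phi_i\phi_j\,dx)_{i,j}$, lumped mass $W_h=\mathrm{diag}(\int_{\Omega_h}\phi_i\,dx)_i$; $\gamma=4$ if $n=2$, $\gamma=5$ if $n=3$ (so that $\mathbf z^TM_h\mathbf z\le\mathbf z^TW_h\mathbf z\le\gamma\,\mathbf z^TM_h\mathbf z$). $\mathbf y_d,\mathbf y_r\in\mathbb{R}^{N_h}$ are coefficient vectors of the $L^2$-projections of $y_d,y_r\in L^2(\Omega)$ onto $Y_h$; $a\le0\le b$, $\alpha,\beta>0$. For a symmetric positive (semi)definite $P$, $\|\mathbf x\|_P^2=\mathbf x^TP\mathbf x$. The discrete dual objective is $$\Phi_h(\boldsymbol\lambda,\mathbf p,\boldsymbol\mu)=\tfrac12\|K_h\mathbf p-M_h\mathbf y_d\|_{M_h^{-1}}^2+\tfrac1{2\alpha}\|\boldsymbol\lambda+\boldsymbol\mu-\mathbf p\|_{M_h}^2+\langle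 M_h\mathbf y_r,\mathbf p\rangle+\delta_{[-\beta,\beta]}(\boldsymbol\lambda)+\delta^*_{[a,b]}(M_h\boldsymbol\mu)-\tfrac12\|\mathbf y_d\|_{M_h}^2,$$ where $\delta_{[-\beta,\beta]}$ is the indicator of the box $[-\beta,\beta]^{N_h}$ and $\delta^*_{[a,b]}(\boldsymbol\xi)=\sum_i\max(a\xi_i,b\xi_i)$. Discrete sGS-mABCD algorithm: given $\mathbf z^0$ with $\boldsymbol\lambda^0\in[-\beta,\beta]^{N_h}$, set $(\tilde{\boldsymbol\lambda}^1,\tilde{\mathbf p}^1,\tilde{\boldsymbol\mu}^1)=\mathbf z^0$, $t_1=1$. For $k\ge1$: (i) $\hat{\mathbf p}^k=\arg\min_{\mathbf p}\{\tfrac12\|K_h\mathbf p-M_h\mathbf y_d\|_{M_h^{-1}}^2+\tfrac1{2\alpha}\|\mathbf p-\tilde{\boldsymbol\lambda}^k-\tilde{\boldsymbol\mu}^k\|_{M_h}^2+\langle M_h\mathbf y_r,\mathbf p\rangle\}$; (ii) $\boldsymbol\lambda^k=\arg\min_{\boldsymbol\lambda}\{\delta_{[-\beta,\beta]}(\boldsymbol\lambda)+\tfrac1{2\alpha}\|\boldsymbol\lambda-(\hat{\mathbf p}^k-\tilde{\boldsymbol\mu}^k)\|_{M_h}^2+\tfrac1{2\alpha}\|\boldsymbol\lambda-\tilde{\boldsymbol\lambda}^k\|_{W_h-M_h}^2\}$ $=\Pi_{[-\beta,\beta]}(\tilde{\boldsymbol\lambda}^k+W_h^{-1}M_h(\hat{\mathbf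 p}^k-\tilde{\boldsymbol\mu}^k-\tilde{\boldsymbol\lambda}^k))$; (iii) $\mathbf p^k$ is defined as in (i) with $\tilde{\boldsymbol\lambda}^k$ replaced by $\boldsymbol\lambda^k$; (iv) $\boldsymbol\mu^k=\arg\min_{\boldsymbol\mu}\{\delta^*_{[a,b]}(M_h\boldsymbol\mu)+\tfrac1{2\alpha}\|\boldsymbol\mu-(\mathbf p^k-\boldsymbol\lambda^k)\|_{M_h}^2+\tfrac1{2\alpha}\|\boldsymbol\mu-\tilde{\boldsymbol\mu}^k\|^2_{\gamma M_hW_h^{-1}M_h-M_h}\}$; (v) $t_{k+1}=\frac{1+\sqrt{1+4t_k^2}}2$, $\beta_k=\frac{t_k-1}{t_{k+1}}$, $\tilde{\boldsymbol\lambda}^{k+1}=\boldsymbol\lambda^k+\beta_k(\boldsymbol\lambda^k-\boldsymbol\lambda^{k-1})$, and likewise for $\tilde{\mathbf p}^{k+1}$, $\tilde{\boldsymbol\mu}^{k+1}$. *)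

From HB Require Import structures.
From mathcomp Require Import all_boot all_order all_algebra.
Set Implicit Arguments. Unset Strict Implicit. Unset Printing Implicit Defensive.
Import Order.TTheory GRing.Theory Num.Theory.
Local Open Scope ring_scope.

Section Defs.
Variable R : rcfType.
Variable N : nat.
Notation vec := 'cV[R]_N.
Notation mat := 'M[R]_N.

Definition qf (P : mat) (x : vec) : R := (x^T *m P *m x) ord0 ord0.
Definition ip (x y : vec) : R := (x^T *m y) ord0 ord0.

Definition sym_mx (P : mat) : Prop := P^T = P.
Definition posdef_mx (P : mat) : Prop := forall x : vec, x != 0 -> 0 < qf P x.
Definition diag_matrix (P : mat) : Prop := forall i j : 'I_N, i != j -> P i j = 0.

Definition gamma_of (n : nat) : R := if n == 2%N then 4 else 5.

Definition in_box (beta : R) (l : vec) : Prop :=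
  forall i : 'I_N, - beta <= l i ord0 <= beta.

(* support function delta^*_{[a,b]}(xi) = sum_i max(a xi_i, b xi_i) *)
Definition delta_star (a b : R) (xi : vec) : R :=
  \sum_(i < N) Num.max (a * xi i ord0) (b * xi i ord0).

Definition is_argmin (D : vec -> Prop) (f : vec -> R) (x : vec) : Prop :=
  D x /\ forall y, D y -> f x <= f y.

Variables (K M W : mat) (yd yr : vec) (alpha beta a b gamma : R).

(* Finite part of Phi_h: Phi_h = Phi_fin + delta_{[-beta,beta]}(lambda), i.e.
   Phi_h(l,p,m) = Phi_fin(l,p,m) if l is in the box and +infinity otherwise. *)
Definition Phi_fin (l p m : vec) : R :=
  2^-1 * qf (invmx M) (K *m p - M *m yd)
  + (2 * alpha)^-1 * qf M (l + m - p)
  + ip (M *m yr) p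
  + delta_star a b (M *m m)
  - 2^-1 * qf M yd.

Definition Fp (lt mt : vec) (p : vec) : R :=
  2^-1 * qf (invmx M) (K *m p - M *m yd)
  + (2 * alpha)^-1 * qf M (p - lt - mt)
  + ip (M *m yr) p.

(* objective of sub-step (ii) (without the indicator, which is the domain) *)
Definition Fl (ph mt lt : vec) (l : vec) : R :=
  (2 * alpha)^-1 * qf M (l - (ph - mt))
  + (2 * alpha)^-1 * qf (W - M) (l - lt).

Definition Fm (pk lk mt : vec) (m : vec) : R :=
  delta_star a b (M *m m)
  + (2 * alpha)^-1 * qf M (m - (pk - lk))
  + (2 * alpha)^-1 * qf (gamma *: (M *m invmx W *m M) - M) (m - mt).

(* t-sequence: tseq k = t_{k+1}; t_1 = 1, t_{k+1} = (1 + sqrt(1 + 4 t_k^2))/2 *)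
Fixpoint tseq (k : nat) : R :=
  match k with
  | 0%N => 1
  | S j => (1 + Num.sqrt (1 + 4 * tseq j ^+ 2)) / 2
  end.
Definition beta_k (k : nat) : R := (tseq k.-1 - 1) / tseq k.

(* The discrete sGS-mABCD iteration.  lam, p, mu : iterates (index 0 = z^0);
   lamt, pt, mut : extrapolated points tilde z^k (k >= 1); ph : hat p^k. *)
Definition sGS_mABCD (lam p mu lamt pt mut ph : nat -> vec) : Prop :=
  [/\ lamt 1%N = lam 0%N, pt 1%N = p 0%N, mut 1%N = mu 0%N &
   forall k : nat, (1 <= k)%N ->
   [/\ is_argmin (fun _ => True) (Fp (lamt k) (mut k)) (ph k),
       is_argmin (in_box beta) (Fl (ph k) (mut k) (lamt k)) (lam k),
       is_argmin (fun _ => True) (Fp (lam k) (mut k)) (p k),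
       is_argmin (fun _ => True) (Fm (p k) (lam k) (mut k)) (mu k) &
     [/\ lamt k.+1 = lam k + beta_k k *: (lam k - lam k.-1),
       pt k.+1 = p k + beta_k k *: (p k - p k.-1) &
       mut k.+1 = mu k + beta_k k *: (mu k - mu k.-1)]]].

Definition Gh : mat := M + alpha *: (K *m invmx M *m K).

Definition Snorm2 (dl dp dm : vec) : R :=
  alpha^-1 * (qf (M *m invmx Gh *m M + W - M) dl
              + qf (gamma *: (M *m invmx W *m M)) dm).

End Defs.

(* Eliminating [p] by the symmetric Gauss-Seidel decomposition, one sweep of the
   algorithm is a proximal step for [Phi_h] in the [S_h]-seminorm: for every [z] with
   [lambda] in the box, [Phi_h(z^k) + |z - z^k|_S^2 / 2 <= Phi_h(z) + |z - ~z^k|_S^2 / 2].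
   The [lambda]-block [M G^-1 M] of [S_h] comes from [G (p^k - ^p^k) = M (lambda^k - ~lambda^k)],
   and the [mu]-block dominates [M] because [W <= gamma M].  The usual FISTA Lyapunov
   function [t_k^2 (Phi_h(z^k) - Phi_h(z_star)) + |t_k z^k - (t_k - 1) z^(k-1) - z_star|_S^2 / 2]
   is then nonincreasing since [t_(k+1)^2 - t_(k+1) = t_k^2], and [t_k >= (k+1)/2] gives
   the rate.  Boundedness holds because [Phi_h] has bounded sublevel sets on the box. *)

From HB Require Import structures.
From mathcomp Require Import all_boot all_order all_algebra.
From mathcomp Require Import ring lra.
Import Order.TTheory GRing.Theory Num.Theory.
Local Open Scope ring_scope.
Set Implicit Arguments.
Unset Strict Implicit.

Section QuadraticForms.
Variables (R : rcfType) (N : nat).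
Implicit Types (P Q A : 'M[R]_N) (x y z u d e : 'cV[R]_N).

Lemma ipC x y : ip x y = ip y x.
Proof. by rewrite /ip -[y^T *m x]trmxK trmx_mul trmxK [in RHS]mxE. Qed.

Lemma ipDr x y z : ip x (y + z) = ip x y + ip x z.
Proof. by rewrite /ip mulmxDr mxE. Qed.

Lemma ipDl x y z : ip (y + z) x = ip y x + ip z x.
Proof. by rewrite ipC ipDr !(ipC x). Qed.

Lemma ipZr (c : R) x y : ip x (c *: y) = c * ip x y.
Proof. by rewrite /ip -scalemxAr mxE. Qed.

Lemma ipZl (c : R) x y : ip (c *: x) y = c * ip x y.
Proof. by rewrite ipC ipZr ipC. Qed.

Lemma ipNr x y : ip x (- y) = - ip x y.
Proof. by rewrite -scaleN1r ipZr mulN1r. Qed.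

Lemma ipNl x y : ip (- x) y = - ip x y.
Proof. by rewrite ipC ipNr ipC. Qed.

Lemma ipBr x y z : ip x (y - z) = ip x y - ip x z.
Proof. by rewrite ipDr ipNr. Qed.

Lemma ipBl x y z : ip (y - z) x = ip y x - ip z x.
Proof. by rewrite ipDl ipNl. Qed.

Lemma ip0r x : ip x 0 = 0.
Proof. by rewrite /ip mulmx0 mxE. Qed.

Lemma ip_mulmxl A x y : ip (A *m x) y = ip x (A^T *m y).
Proof. by rewrite /ip trmx_mul mulmxA. Qed.

Lemma ip_delta_mx (i : 'I_N) x : ip (delta_mx i ord0) x = x i ord0.
Proof. by rewrite /ip trmx_delta -rowE mxE. Qed.

Lemma ip_sym_mulmx P x y : sym_mx P -> ip x (P *m y) = ip y (P *m x).
Proof. by move=> hP; rewrite ipC ip_mulmxl hP. Qed.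

Lemma ipxxE x : ip x x = \sum_i x i ord0 ^+ 2.
Proof. by rewrite /ip mxE; apply: eq_bigr => i _; rewrite mxE expr2. Qed.

Lemma ipxx_ge0 x : 0 <= ip x x.
Proof. by rewrite ipxxE sumr_ge0 // => i _; rewrite sqr_ge0. Qed.

Lemma ipxx_eq0 x : ip x x = 0 -> x = 0.
Proof.
rewrite ipxxE => /eqP; rewrite psumr_eq0 => [/allP x0|i _]; last by rewrite sqr_ge0.
apply/matrixP => i j; rewrite (ord1 j) mxE.
by have /implyP /(_ isT) := x0 i (mem_index_enum _); rewrite sqrf_eq0 => /eqP.
Qed.

Lemma qfE P x : qf P x = ip x (P *m x).
Proof. by rewrite /qf /ip mulmxA. Qed.

Lemma qfDZ P u d (t : R) : sym_mx P ->
  qf P (u + t *: d) = qf P u + t * (2 * ip d (P *m u)) + t ^+ 2 * qf P d.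
Proof.
move=> hP; rewrite !qfE mulmxDr -scalemxAr !(ipDl, ipDr, ipZl, ipZr).
by rewrite (ip_sym_mulmx u d hP); ring.
Qed.

Lemma qfD P u d : sym_mx P -> qf P (u + d) = qf P u + 2 * ip d (P *m u) + qf P d.
Proof. by move=> hP; rewrite -[d in LHS]scale1r qfDZ // mul1r expr1n mul1r. Qed.

Lemma qf_three_point P x y z : sym_mx P ->
  qf P (x - z) = qf P (y - z) + 2 * ip (x - y) (P *m (y - z)) + qf P (x - y).
Proof. by move=> hP; rewrite -qfD // [y - z + _]addrC subrKA. Qed.

Lemma qfN P u : qf P (- u) = qf P u.
Proof. by rewrite !qfE mulmxN ipNl ipNr opprK. Qed.

Lemma qfZ P (c : R) u : qf P (c *: u) = c ^+ 2 * qf P u.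
Proof. by rewrite !qfE -scalemxAr ipZl ipZr mulrA expr2. Qed.

Lemma qfB P x y : sym_mx P -> qf P x - qf P y = ip (x - y) (P *m (x + y)).
Proof. by move=> hP; rewrite !qfE mulmxDr ipBl !ipDr (ip_sym_mulmx y x hP); ring. Qed.

Lemma qf_addmx P Q u : qf (P + Q) u = qf P u + qf Q u.
Proof. by rewrite !qfE mulmxDl ipDr. Qed.

Lemma qf_submx P Q u : qf (P - Q) u = qf P u - qf Q u.
Proof. by rewrite !qfE mulmxBl ipBr. Qed.

Lemma qf_scalemx P (c : R) u : qf (c *: P) u = c * qf P u.
Proof. by rewrite !qfE -scalemxAl ipZr. Qed.

Lemma qf_conjmx P A x : sym_mx P -> qf (P *m A *m P) x = qf A (P *m x).
Proof. by move=> hP; rewrite !qfE -!mulmxA ip_mulmxl hP. Qed.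

Lemma qf_invmx P x : sym_mx P -> P \in unitmx -> qf (invmx P) x = qf P (invmx P *m x).
Proof. by move=> hP hU; rewrite !qfE mulmxA mulmxV // mul1mx ipC. Qed.

Lemma qfD_ge P y d e : sym_mx P -> (forall z, 0 <= qf P z) ->
  2 * ip d (P *m (y - e)) - qf P e <= qf P (y + d) - qf P y.
Proof.
move=> hP hpsd; have := hpsd (d + e); rewrite !qfD // mulmxBr ipBr.
by rewrite (ip_sym_mulmx e d hP); lra.
Qed.

Lemma qfD_le P x y : sym_mx P -> (forall z, 0 <= qf P z) ->
  qf P (x + y) <= 2 * qf P x + 2 * qf P y.
Proof.
move=> hP hpsd; have := hpsd (x + (-1) *: y).
by rewrite qfDZ // qfD // expr2; lra.
Qed.

Lemma sym_invmx P : sym_mx P -> sym_mx (invmx P).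
Proof. by rewrite /sym_mx trmx_inv => ->. Qed.

Lemma symD P Q : sym_mx P -> sym_mx Q -> sym_mx (P + Q).
Proof. by rewrite /sym_mx linearD /= => -> ->. Qed.

Lemma symB P Q : sym_mx P -> sym_mx Q -> sym_mx (P - Q).
Proof. by rewrite /sym_mx linearB /= => -> ->. Qed.

Lemma symZ P (c : R) : sym_mx P -> sym_mx (c *: P).
Proof. by rewrite /sym_mx linearZ /= => ->. Qed.

Lemma sym_conjmx P A : sym_mx P -> sym_mx A -> sym_mx (P *m A *m P).
Proof. by rewrite /sym_mx !trmx_mul => -> ->; rewrite mulmxA. Qed.

Lemma diag_sym P : diag_matrix P -> sym_mx P.
Proof.
move=> hP; apply/matrixP => i j; rewrite mxE.
by have [->//|nij] := eqVneq i j; rewrite !hP // eq_sym.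
Qed.

Lemma posdef_qf_ge0 P x : posdef_mx P -> 0 <= qf P x.
Proof.
move=> hP; have [->|/hP/ltW //] := eqVneq x 0.
by rewrite qfE mulmx0 ip0r.
Qed.

Lemma posdef_unitmx P : posdef_mx P -> P \in unitmx.
Proof.
move=> hP; have P_inj x : P *m x = 0 -> x = 0.
  by move=> Px0; apply/eqP/negPn/negP => /hP; rewrite qfE Px0 ip0r ltxx.
rewrite -unitmx_tr -row_free_unit -kermx_eq0; apply/eqP/row_matrixP => i.
have /sub_kermxP ker_i : (row i (kermx P^T) <= kermx P^T)%MS by exact: row_sub.
rewrite row0; apply: trmx_inj; rewrite trmx0; apply: P_inj.
by apply: trmx_inj; rewrite trmx_mul trmxK ker_i trmx0.
Qed.

Lemma invmx_posdef P : sym_mx P -> posdef_mx P -> posdef_mx (invmx P).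
Proof.
move=> hP hpd v nv; have hU := posdef_unitmx hpd.
rewrite qf_invmx //; apply: hpd; apply/negP => /eqP h.
by move/negP: nv; apply; apply/eqP; rewrite -[v]mul1mx -(mulmxV hU) -mulmxA h mulmx0.
Qed.

Lemma qf_cauchy_schwarz P x y : sym_mx P -> posdef_mx P ->
  ip y (P *m x) ^+ 2 <= qf P y * qf P x.
Proof.
move=> hP hpd; have [->|ny] := eqVneq y 0.
  by rewrite /ip trmx0 mul0mx mxE expr2 mul0r qfE mulmx0 ip0r mul0r.
have q_gt0 := hpd y ny; set q := qf P y in q_gt0 *; set c := ip y (P *m x).
have := posdef_qf_ge0 (x + (- (c / q)) *: y) hpd.
rewrite qfDZ // -/q -/c => h.
suff : 0 <= q * qf P x - c ^+ 2 by lra.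
have -> : q * qf P x - c ^+ 2 =
    q * (qf P x + - (c / q) * (2 * c) + (- (c / q)) ^+ 2 * q).
  by field; exact: lt0r_neq0.
exact: mulr_ge0 (ltW q_gt0) h.
Qed.

(* Each coordinate is an inner product [x_i = <P^-1 e_i, P x>], to which Cauchy-Schwarz applies. *)
Lemma posdef_coord_bound P : sym_mx P -> posdef_mx P ->
  exists2 C, 0 <= C & forall x (i : 'I_N), `|x i ord0| <= 1 + C * qf P x.
Proof.
move=> hP hpd; have hU := posdef_unitmx hpd.
pose c i := qf P (invmx P *m delta_mx i (@ord0 0)).
have c_ge0 i : 0 <= c i by apply: posdef_qf_ge0.
exists (\sum_i c i) => [|x i]; first exact: sumr_ge0.
have xiE : x i ord0 = ip (invmx P *m delta_mx i ord0) (P *m x).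
  by rewrite ip_sym_mulmx // mulmxA mulmxV // mul1mx ipC ip_delta_mx.
have xi2 : x i ord0 ^+ 2 <= c i * qf P x by rewrite xiE; apply: qf_cauchy_schwarz.
have ci_le : c i <= \sum_j c j.
  by rewrite (bigD1 i) //= lerDl; apply: sumr_ge0 => j _.
have qx_ge0 : 0 <= qf P x by apply: posdef_qf_ge0.
have xi_le : `|x i ord0| <= 1 + x i ord0 ^+ 2.
  by rewrite -real_normK ?num_real //; have := normr_ge0 (x i ord0); nra.
by have := ler_wpM2r qx_ge0 ci_le; lra.
Qed.

End QuadraticForms.

Lemma qf_block_diag (R : rcfType) (N1 N2 : nat) (A : 'M[R]_N1) (B : 'M[R]_N2) u v :
  qf (block_mx A 0 0 B) (col_mx u v) = qf A u + qf B v.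
Proof.
by rewrite /qf tr_col_mx mul_row_block !mulmx0 addr0 add0r mul_row_col mxE.
Qed.

Lemma ge0_of_shift_ge0 (R : rcfType) (v c : R) :
  (forall t, 0 < t <= 1 -> 0 <= v + t * c) -> 0 <= v.
Proof.
move=> shift_ge0; rewrite leNgt; apply/negP => v_lt0.
have den_gt0 : 0 < `|c| - v by have := normr_ge0 c; lra.
set t := - v / (2 * (`|c| - v)).
have t_gt0 : 0 < t by rewrite /t divr_gt0 // ?oppr_gt0 // mulr_gt0.
have tE : t * (2 * (`|c| - v)) = - v by rewrite /t mulfVK // mulf_neq0 // gt_eqF.
have t_le1 : t <= 1 by have := normr_ge0 c; nra.
have := shift_ge0 t; rewrite t_gt0 t_le1 => /(_ isT).
have : t * c <= t * `|c| by rewrite ler_pM2l // ler_norm.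
nra.
Qed.

Section FirstOrderOptimality.
Variables (R : rcfType) (N : nat).
Implicit Types (x y d : 'cV[R]_N).

Lemma argmin_first_order (D : 'cV[R]_N -> Prop) (h phi L C : 'cV[R]_N -> R) x :
  (forall y t, D y -> 0 <= t <= 1 -> D (x + t *: (y - x))) ->
  (forall y t, D y -> 0 <= t <= 1 -> h (x + t *: (y - x)) <= h x + t * (h y - h x)) ->
  (forall d t, phi (x + t *: d) = phi x + t * L d + t ^+ 2 * C d) ->
  is_argmin D (fun z => h z + phi z) x ->
  forall y, D y -> 0 <= h y - h x + L (y - x).
Proof.
move=> D_convex h_convex phiE [_ x_min] y Dy.
apply: (@ge0_of_shift_ge0 _ _ (C (y - x))) => t /andP [t_gt0 t_le1].
have t01 : 0 <= t <= 1 by rewrite t_le1 ltW.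
have := x_min _ (D_convex _ _ Dy t01); rewrite phiE.
have := h_convex _ _ Dy t01; rewrite expr2 => hle minle.
have : 0 <= t * (h y - h x + L (y - x) + t * C (y - x)) by rewrite mulrDr mulrA; lra.
by rewrite pmulr_rge0.
Qed.

Lemma argmin_first_order_quad (D : 'cV[R]_N -> Prop) (phi L C : 'cV[R]_N -> R) x :
  (forall y t, D y -> 0 <= t <= 1 -> D (x + t *: (y - x))) ->
  (forall d t, phi (x + t *: d) = phi x + t * L d + t ^+ 2 * C d) ->
  is_argmin D phi x -> forall y, D y -> 0 <= L (y - x).
Proof.
move=> D_convex phiE [Dx x_min] y Dy.
have x_min' : is_argmin D (fun z => 0 + phi z) x.
  by split=> // z Dz; rewrite !add0r; apply: x_min.
have := @argmin_first_order D (fun _ => 0) phi L C x D_convex _ phiE x_min' y Dy.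
by rewrite /= !subr0 add0r; apply=> *; rewrite mulr0 addr0.
Qed.

Lemma argmin_grad_eq0 (phi : 'cV[R]_N -> R) (g : 'cV[R]_N) (C : 'cV[R]_N -> R) x :
  (forall d t, phi (x + t *: d) = phi x + t * ip d g + t ^+ 2 * C d) ->
  is_argmin (fun _ => True) phi x -> g = 0.
Proof.
move=> phiE x_min.
have := argmin_first_order_quad (fun _ _ _ _ => I) phiE x_min (y := x - g) I.
rewrite addrAC subrr add0r ipNl oppr_ge0 => g2_le0.
by apply: ipxx_eq0; apply/le_anti; rewrite g2_le0 ipxx_ge0.
Qed.

Lemma in_box_convex (beta : R) x y t :
  in_box beta x -> in_box beta y -> 0 <= t <= 1 -> in_box beta (x + t *: (y - x)).
Proof.
move=> hx hy /andP [t_ge0 t_le1] i; rewrite !mxE.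
move: (hx i) (hy i) => /andP [x1 x2] /andP [y1 y2].
have e1 : 0 <= (1 - t) * (x i ord0 + beta) by apply: mulr_ge0; lra.
have e2 : 0 <= t * (y i ord0 + beta) by apply: mulr_ge0; lra.
have e3 : 0 <= (1 - t) * (beta - x i ord0) by apply: mulr_ge0; lra.
have e4 : 0 <= t * (beta - y i ord0) by apply: mulr_ge0; lra.
by apply/andP; split; nra.
Qed.

Lemma maxr_mul_convex (a b u v t : R) : 0 <= t <= 1 ->
  Num.max (a * (u + t * (v - u))) (b * (u + t * (v - u)))
  <= Num.max (a * u) (b * u) + t * (Num.max (a * v) (b * v) - Num.max (a * u) (b * u)).
Proof.
move=> /andP [t_ge0 t_le1].
set mu := Num.max (a * u) (b * u); set mv := Num.max (a * v) (b * v).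
have [au bu] : a * u <= mu /\ b * u <= mu by rewrite !le_max !lexx orbT.
have [av bv] : a * v <= mv /\ b * v <= mv by rewrite !le_max !lexx orbT.
have e1 : 0 <= (1 - t) * (mu - a * u) by apply: mulr_ge0; lra.
have e2 : 0 <= (1 - t) * (mu - b * u) by apply: mulr_ge0; lra.
have e3 : 0 <= t * (mv - a * v) by apply: mulr_ge0; lra.
have e4 : 0 <= t * (mv - b * v) by apply: mulr_ge0; lra.
by rewrite ge_max; apply/andP; split; nra.
Qed.

Lemma delta_star_convex (a b : R) (M : 'M[R]_N) x y t : 0 <= t <= 1 ->
  delta_star a b (M *m (x + t *: (y - x))) <=
  delta_star a b (M *m x) + t * (delta_star a b (M *m y) - delta_star a b (M *m x)).
Proof.
move=> t01; rewrite /delta_star -sumrB mulr_sumr -big_split /=.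
apply: ler_sum => i _; rewrite mulmxDr -scalemxAr mulmxBr !mxE.
exact: maxr_mul_convex.
Qed.

Lemma delta_star_ge0 (a b : R) x : a <= 0 -> 0 <= b -> 0 <= delta_star a b x.
Proof.
move=> a_le0 b_ge0; apply: sumr_ge0 => i _; rewrite le_max.
have [xi_ge0|xi_lt0] := lerP 0 (x i ord0).
  by apply/orP; right; rewrite mulr_ge0.
by apply/orP; left; rewrite mulr_le0 // ltW.
Qed.

End FirstOrderOptimality.

Section MomentumSequence.
Variable R : rcfType.

Lemma tseq_ge1 k : 1 <= tseq R k.
Proof.
elim: k => [|k IH] //=.
have sqrt_ge1 : 1 <= Num.sqrt (1 + 4 * tseq R k ^+ 2).
  by rewrite -[X in X <= _]sqrtr1 ler_sqrt; have := sqr_ge0 (tseq R k); lra.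
lra.
Qed.

Lemma tseq_sqrB k : tseq R k.+1 ^+ 2 - tseq R k.+1 = tseq R k ^+ 2.
Proof.
rewrite /=; set s := Num.sqrt _.
have s2 : s ^+ 2 = 1 + 4 * tseq R k ^+ 2.
  by rewrite sqr_sqrtr //; have := sqr_ge0 (tseq R k); lra.
have -> : ((1 + s) / 2) ^+ 2 - (1 + s) / 2 = (s ^+ 2 - 1) / 4 by field.
by rewrite s2; field.
Qed.

Lemma tseq_ge k : (k%:R + 2) / 2 <= tseq R k.
Proof.
elim: k => [|k IH] /=; first by lra.
have t_ge1 := tseq_ge1 k.
have sqrt_ge : 2 * tseq R k <= Num.sqrt (1 + 4 * tseq R k ^+ 2).
  rewrite -(@ger0_norm _ (2 * tseq R k)); last by lra.
  by rewrite -sqrtr_sqr ler_sqrt ?exprMn; have := sqr_ge0 (tseq R k); lra.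
by rewrite -natr1; lra.
Qed.

End MomentumSequence.

Lemma le_div_sqr_of_energy (R : rcfType) (s D tau c : R) :
  0 < c -> c / 2 <= s -> s ^+ 2 * D <= tau -> 0 <= tau -> D <= 4 * tau / c ^+ 2.
Proof.
move=> c_gt0 c_le s2D_le tau_ge0.
rewrite ler_pdivlMr ?exprn_gt0 //.
have c2_le : c ^+ 2 <= 4 * s ^+ 2.
  have c2_ge0 : 0 <= c / 2 by lra.
  by have := ler_pM c2_ge0 c2_ge0 c_le c_le; rewrite -!expr2 expr_div_n; lra.
have [D_le0|D_gt0] := lerP D 0; first by nra.
by have := ler_wpM2l (ltW D_gt0) c2_le; nra.
Qed.

Section AcceleratedRate.
Variables (R : rcfType) (m : nat) (P : 'M[R]_m).
Hypotheses (P_sym : sym_mx P) (P_psd : forall x, 0 <= qf P x).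

Lemma momentum_identity (t : R) a w c1 c2 :
  t * (t - 1) * (qf P (c1 - a) - qf P (c1 - w)) + t * (qf P (c2 - a) - qf P (c2 - w))
  = qf P (t *: a - (t - 1) *: c1 - c2) - qf P (t *: w - (t - 1) *: c1 - c2).
Proof.
rewrite !qfB //.
have diffE c : c - a - (c - w) = w - a by rewrite opprB addrC addrA subrK.
rewrite !diffE.
have -> : t *: a - (t - 1) *: c1 - c2 - (t *: w - (t - 1) *: c1 - c2) = (- t) *: (w - a).
  by apply/matrixP => i j; rewrite !mxE; ring.
rewrite ipZl -!ipZr -ipDr !scalemxAr -mulmxDr.
by congr (ip _ (P *m _)); apply/matrixP => i j; rewrite !mxE; ring.
Qed.

Variables (F : nat -> R) (Fs : R) (x xt : nat -> 'cV[R]_m) (xs : 'cV[R]_m).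
Hypothesis descent_prev : forall k, (1 <= k)%N ->
  F k.+1 + 2^-1 * qf P (x k - x k.+1) <= F k + 2^-1 * qf P (x k - xt k.+1).
Hypothesis descent_sol : forall k, (1 <= k)%N ->
  F k + 2^-1 * qf P (xs - x k) <= Fs + 2^-1 * qf P (xs - xt k).
Hypothesis xt_momentum : forall k, (1 <= k)%N ->
  xt k.+1 = x k + beta_k R k *: (x k - x k.-1).
Hypothesis xt1 : xt 1%N = x 0%N.

Definition fista_energy k := tseq R k.-1 ^+ 2 * (F k - Fs)
  + 2^-1 * qf P (tseq R k.-1 *: x k - (tseq R k.-1 - 1) *: x k.-1 - xs).

Lemma fista_energy1 : fista_energy 1 <= 2^-1 * qf P (x 0%N - xs).
Proof.
have := descent_sol (isT : (1 <= 1)%N).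
rewrite xt1 /fista_energy /= expr1n mul1r subrr scale0r subr0 scale1r.
by rewrite -(opprB (x 1%N)) -(opprB (x 0%N)) !qfN; lra.
Qed.

Lemma fista_energy_decr k : fista_energy k.+2 <= fista_energy k.+1.
Proof.
set t := tseq R k.+1; set s := tseq R k.
have t_ge1 : 1 <= t := tseq_ge1 R k.+1.
have extrapolE : t *: xt k.+2 - (t - 1) *: x k.+1 - xs = s *: x k.+1 - (s - 1) *: x k - xs.
  rewrite xt_momentum // (_ : beta_k R k.+1 = (s - 1) / t) //; apply/matrixP => i j; rewrite !mxE.
  by field; rewrite gt_eqF // (lt_le_trans ltr01 t_ge1).
have := momentum_identity t (x k.+2) (xt k.+2) (x k.+1) xs; rewrite extrapolE => momE.
have tt1_ge0 : 0 <= t * (t - 1) by apply: mulr_ge0; lra.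
have := ler_wpM2l tt1_ge0 (descent_prev (isT : (1 <= k.+1)%N)).
have := ler_wpM2l (le_trans ler01 t_ge1) (descent_sol (isT : (1 <= k.+2)%N)).
rewrite /fista_energy !succnK -/t -/s -(tseq_sqrB R k) -/t => sol_le prev_le; lra.
Qed.

Lemma fista_energy_le k : (1 <= k)%N -> fista_energy k <= 2^-1 * qf P (x 0%N - xs).
Proof.
case: k => [//|k] _; elim: k => [|k IH]; first exact: fista_energy1.
exact: le_trans (fista_energy_decr k) IH.
Qed.

Lemma fista_rate k : (1 <= k)%N ->
  F k - Fs <= 4 * (2^-1 * qf P (x 0%N - xs)) / (k%:R + 1) ^+ 2.
Proof.
case: k => [//|k] _.
have energy_le := fista_energy_le (isT : (1 <= k.+1)%N); rewrite /fista_energy /= in energy_le.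
have qU_ge0 := P_psd (tseq R k *: x k.+1 - (tseq R k - 1) *: x k - xs).
have q0_ge0 := P_psd (x 0%N - xs).
apply: (le_div_sqr_of_energy (s := tseq R k)); [by rewrite ltr_pwDr ?ler0n| |lra|lra].
by rewrite -natr1 -addrA (_ : 1 + 1 = 2 :> R) ?tseq_ge //; lra.
Qed.

End AcceleratedRate.

(* [M <= gamma * M W^-1 M] follows from [W <= gamma M] because inversion reverses
   the Loewner order; here it is read off [0 <= qf W (W^-1 M e - e / gamma)]. *)
Lemma qf_le_scale_conjmx_invmx (R : rcfType) N (M W : 'M[R]_N) (gamma : R) e :
  0 < gamma -> sym_mx M -> sym_mx W -> W \in unitmx -> (forall z, 0 <= qf W z) ->
  (forall z, qf W z <= gamma * qf M z) ->
  qf M e <= qf (gamma *: (M *m invmx W *m M)) e.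
Proof.
move=> gamma_gt0 M_sym W_sym W_unit W_psd W_le.
rewrite qf_scalemx qf_conjmx //; set v := M *m e.
have := W_psd (invmx W *m v + (-1) *: (gamma^-1 *: e)).
rewrite qfDZ // -qf_invmx // mulmxA mulmxV // mul1mx qfZ ipZl -qfE -/v.
have gV : gamma * gamma^-1 = 1 by rewrite mulfV // gt_eqF.
have := W_le (gamma^-1 *: e).
rewrite !qfZ mulrA (_ : gamma * gamma^-1 ^+ 2 = gamma^-1); last first.
  by rewrite expr2 mulrA gV mul1r.
move=> We_le W_ge0.
have : gamma^-1 * qf M e <= qf (invmx W) v by lra.
by move/(ler_wpM2l (ltW gamma_gt0)); rewrite mulrA gV mul1r.
Qed.

Section SGSStep.
Variables (R : rcfType) (N : nat) (K M W : 'M[R]_N) (yd yr : 'cV[R]_N).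
Variables (alpha beta a b gamma : R).
Hypotheses (alpha_gt0 : 0 < alpha) (M_sym : sym_mx M) (M_posdef : posdef_mx M)
  (K_sym : sym_mx K).
Implicit Types (l p m lt mt ph y d : 'cV[R]_N).

Let M_unit : M \in unitmx := posdef_unitmx M_posdef.
Let Minv_sym : sym_mx (invmx M) := sym_invmx M_sym.
Let Minv_posdef : posdef_mx (invmx M) := invmx_posdef M_sym M_posdef.

Definition smooth_part p := 2^-1 * qf (invmx M) (K *m p - M *m yd) + ip (M *m yr) p.

Definition smooth_grad p := K *m (invmx M *m (K *m p - M *m yd)) + M *m yr.

Lemma Phi_finE l p m : Phi_fin K M yd yr alpha a b l p m =
  smooth_part p + (2 * alpha)^-1 * qf M (l + m - p) + delta_star a b (M *m m)
  - 2^-1 * qf M yd.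
Proof. by rewrite /Phi_fin /smooth_part; ring. Qed.

Lemma FpE lt mt p :
  Fp K M yd yr alpha lt mt p = smooth_part p + (2 * alpha)^-1 * qf M (p - lt - mt).
Proof. by rewrite /Fp /smooth_part; ring. Qed.

Lemma smooth_partDZ p d t : smooth_part (p + t *: d) =
  smooth_part p + t * ip d (smooth_grad p) + t ^+ 2 * (2^-1 * qf (invmx M) (K *m d)).
Proof.
rewrite /smooth_part.
have -> : K *m (p + t *: d) - M *m yd = (K *m p - M *m yd) + t *: (K *m d).
  by rewrite mulmxDr -scalemxAr addrAC.
rewrite qfDZ // /smooth_grad ipDr ipDr ipZr ip_mulmxl K_sym.
by rewrite (ipC (M *m yr) d); field.
Qed.

Lemma smooth_part_ge p p' : smooth_part p + ip (p' - p) (smooth_grad p) <= smooth_part p'.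
Proof.
have := smooth_partDZ p (p' - p) 1; rewrite scale1r addrC subrK mul1r expr1n mul1r => ->.
by rewrite lerDl mulr_ge0 ?invr_ge0 ?posdef_qf_ge0.
Qed.

Lemma smooth_gradB p ph :
  smooth_grad p - smooth_grad ph = K *m invmx M *m K *m (p - ph).
Proof.
rewrite /smooth_grad [X in _ - X]addrC addrKA -!mulmxBr opprB subrKA.
by rewrite -mulmxBr !mulmxA.
Qed.

Lemma Fp_argmin_grad lt mt p : is_argmin (fun _ => True) (Fp K M yd yr alpha lt mt) p ->
  smooth_grad p = alpha^-1 *: (M *m (lt + mt - p)).
Proof.
move=> p_min; apply/eqP; rewrite -subr_eq0; apply/eqP.
apply: (argmin_grad_eq0 (C := fun d => 2^-1 * qf (invmx M) (K *m d)
   + (2 * alpha)^-1 * qf M d) _ p_min) => d t.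
rewrite !FpE.
have -> : p + t *: d - lt - mt = (p - lt - mt) + t *: d.
  by apply/matrixP => i j; rewrite !mxE; ring.
have -> : lt + mt - p = - (p - lt - mt) by apply/matrixP => i j; rewrite !mxE; ring.
rewrite smooth_partDZ qfDZ // ipBr ipZr mulmxN ipNr invfM.
by field; exact: lt0r_neq0.
Qed.

Lemma sGS_identity lt mt ph l p :
  is_argmin (fun _ => True) (Fp K M yd yr alpha lt mt) ph ->
  is_argmin (fun _ => True) (Fp K M yd yr alpha l mt) p ->
  Gh K M alpha *m (p - ph) = M *m (l - lt).
Proof.
move=> /Fp_argmin_grad ph_grad /Fp_argmin_grad p_grad.
rewrite /Gh mulmxDl -scalemxAl -smooth_gradB p_grad ph_grad -scalerBr scalerA.
rewrite mulfV ?gt_eqF // scale1r -!mulmxBr -mulmxDr; congr (M *m _).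
by apply/matrixP => i j; rewrite !mxE; ring.
Qed.

Lemma Fl_argmin_ineq ph mt lt l y :
  sym_mx (W - M) -> is_argmin (in_box beta) (Fl M W alpha ph mt lt) l -> in_box beta y ->
  0 <= alpha^-1 * ip (y - l) (M *m (l - (ph - mt)))
       + alpha^-1 * ip (y - l) ((W - M) *m (l - lt)).
Proof.
move=> WM_sym l_min y_box.
apply: (argmin_first_order_quad
   (L := fun d => alpha^-1 * ip d (M *m (l - (ph - mt)))
                  + alpha^-1 * ip d ((W - M) *m (l - lt)))
   (C := fun d => (2 * alpha)^-1 * qf M d + (2 * alpha)^-1 * qf (W - M) d)
   _ _ l_min y_box) => [z t z_box t01|d t].
  by apply: in_box_convex => //; case: l_min.
have shiftE c : l + t *: d - c = (l - c) + t *: d by rewrite addrAC.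
rewrite /Fl !shiftE !qfDZ // invfM; field; exact: lt0r_neq0.
Qed.

Lemma Fm_argmin_ineq pk lk mt m y :
  sym_mx (gamma *: (M *m invmx W *m M) - M) ->
  is_argmin (fun _ => True) (Fm M W alpha a b gamma pk lk mt) m ->
  0 <= delta_star a b (M *m y) - delta_star a b (M *m m)
       + (alpha^-1 * ip (y - m) (M *m (m - (pk - lk)))
       + alpha^-1 * ip (y - m) ((gamma *: (M *m invmx W *m M) - M) *m (m - mt))).
Proof.
set E := gamma *: _ - M => E_sym m_min.
pose phi z := (2 * alpha)^-1 * qf M (z - (pk - lk)) + (2 * alpha)^-1 * qf E (z - mt).
have m_min' : is_argmin (fun _ => True) (fun z => delta_star a b (M *m z) + phi z) m.
  by split=> // z _; case: m_min => _ /(_ z I); rewrite /Fm /phi !addrA.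
apply: (argmin_first_order (phi := phi)
   (L := fun d => alpha^-1 * ip d (M *m (m - (pk - lk))) + alpha^-1 * ip d (E *m (m - mt)))
   (C := fun d => (2 * alpha)^-1 * qf M d + (2 * alpha)^-1 * qf E d)
   (fun _ _ _ _ => I) _ _ m_min' I) => [z t _ t01|d t].
  exact: delta_star_convex.
have shiftE c : m + t *: d - c = (m - c) + t *: d by rewrite addrAC.
rewrite /phi !shiftE !qfDZ // invfM; field; exact: lt0r_neq0.
Qed.

Hypotheses (gamma_gt0 : 0 < gamma) (W_sym : sym_mx W)
  (M_le_W : forall z, qf M z <= qf W z) (W_le_M : forall z, qf W z <= gamma * qf M z).

Let M_psd z : 0 <= qf M z := posdef_qf_ge0 z M_posdef.
Let W_posdef : posdef_mx W.
Proof. by move=> z z_neq0; have := M_posdef z_neq0; have := M_le_W z; lra. Qed.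

Lemma Gh_sym : sym_mx (Gh K M alpha).
Proof. by apply: symD => //; apply/symZ/sym_conjmx. Qed.

Lemma Gh_posdef : posdef_mx (Gh K M alpha).
Proof.
move=> x x_neq0; rewrite /Gh qf_addmx qf_scalemx qf_conjmx //.
have := M_posdef x_neq0; have := posdef_qf_ge0 (K *m x) Minv_posdef.
by have := ltW alpha_gt0; nra.
Qed.

Definition Slam := M *m invmx (Gh K M alpha) *m M + W - M.
Definition Smu := gamma *: (M *m invmx W *m M).
(* [S_h] of the paper without its zero [p]-block, acting on [col_mx lambda mu]. *)
Definition Sh := alpha^-1 *: block_mx Slam 0 0 Smu.

Lemma Slam_sym : sym_mx Slam.
Proof. by apply: symB => //; apply: symD => //; apply/sym_conjmx/sym_invmx/Gh_sym. Qed.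

Lemma Smu_sym : sym_mx Smu.
Proof. by apply/symZ/sym_conjmx/sym_invmx. Qed.

Lemma Slam_psd x : 0 <= qf Slam x.
Proof.
rewrite /Slam qf_submx qf_addmx qf_conjmx //.
have := posdef_qf_ge0 (M *m x) (invmx_posdef Gh_sym Gh_posdef).
by have := M_le_W x; lra.
Qed.

Lemma qf_le_Smu x : qf M x <= qf Smu x.
Proof.
apply: qf_le_scale_conjmx_invmx => //; first exact: posdef_unitmx W_posdef.
exact: (fun z => posdef_qf_ge0 z W_posdef).
Qed.

Lemma Sh_sym : sym_mx Sh.
Proof. by rewrite /sym_mx linearZ /= tr_block_mx !trmx0 Slam_sym Smu_sym. Qed.

Lemma Sh_psd x : 0 <= qf Sh x.
Proof.
rewrite -[x]vsubmxK /Sh qf_scalemx qf_block_diag.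
apply: mulr_ge0; first by rewrite invr_ge0 ltW.
by apply: addr_ge0; [exact: Slam_psd | exact: le_trans (M_psd _) (qf_le_Smu _)].
Qed.

Lemma Snorm2_col_mx dl dp dm :
  Snorm2 K M W alpha gamma dl dp dm = qf Sh (col_mx dl dm).
Proof. by rewrite /Sh [RHS]qf_scalemx qf_block_diag. Qed.

Lemma Slam_mulmx lt l ph p : Gh K M alpha *m (p - ph) = M *m (l - lt) ->
  Slam *m (l - lt) = M *m (p - ph) + (W - M) *m (l - lt).
Proof.
move=> sGS; rewrite /Slam -addrA mulmxDl -!mulmxA -sGS mulKmx //.
exact: posdef_unitmx Gh_posdef.
Qed.

Lemma smooth_coupling_ge l p m mt l' p' m' :
  smooth_grad p = alpha^-1 *: (M *m (l + mt - p)) ->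
  smooth_part p + (2 * alpha)^-1 * qf M (l + m - p)
  + alpha^-1 * (ip (l' - l) (M *m (l + mt - p)) + ip (m' - m) (M *m (l + mt - p)))
  - (2 * alpha)^-1 * qf M (m - mt)
  <= smooth_part p' + (2 * alpha)^-1 * qf M (l' + m' - p').
Proof.
move=> p_grad; have := smooth_part_ge p p'; rewrite p_grad ipZr => smooth_ge.
have := qfD_ge (l + m - p) (l' + m' - p' - (l + m - p)) (m - mt) M_sym M_psd.
rewrite [_ + (_ - (l + m - p))]addrC subrK.
have -> : l + m - p - (m - mt) = l + mt - p by apply/matrixP => i j; rewrite !mxE; ring.
have -> : l' + m' - p' - (l + m - p) = (l' - l) + (m' - m) - (p' - p).
  by apply/matrixP => i j; rewrite !mxE; ring.
have c_ge0 : 0 <= (2 * alpha)^-1 by rewrite invr_ge0 mulr_ge0 // ltW.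
rewrite ipBl ipDl => /(ler_wpM2l c_ge0).
by rewrite !invfM; lra.
Qed.

Lemma lam_step_ge ph mt lt l p y : sym_mx (W - M) ->
  is_argmin (in_box beta) (Fl M W alpha ph mt lt) l ->
  Gh K M alpha *m (p - ph) = M *m (l - lt) -> in_box beta y ->
  - (alpha^-1 * ip (y - l) (Slam *m (l - lt))) <= alpha^-1 * ip (y - l) (M *m (l + mt - p)).
Proof.
move=> WM_sym l_min sGS y_box; have := Fl_argmin_ineq WM_sym l_min y_box.
have -> : l - (ph - mt) = (l + mt - p) + (p - ph) by apply/matrixP => i j; rewrite !mxE; ring.
by rewrite (Slam_mulmx sGS) !mulmxDr !ipDr; lra.
Qed.

Lemma mu_step_ge pk lk mt m y :
  is_argmin (fun _ => True) (Fm M W alpha a b gamma pk lk mt) m ->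
  delta_star a b (M *m m) - delta_star a b (M *m y)
  - alpha^-1 * ip (y - m) (Smu *m (m - mt))
  <= alpha^-1 * ip (y - m) (M *m (lk + mt - pk)).
Proof.
move=> m_min; have := Fm_argmin_ineq y (symB Smu_sym M_sym) m_min.
have -> : m - (pk - lk) = (lk + mt - pk) + (m - mt) by apply/matrixP => i j; rewrite !mxE; ring.
by rewrite -/Smu mulmxDr mulmxBl !ipDr ipNr; lra.
Qed.

Lemma sgs_step_descent lt mt ph l p m l' p' m' :
  is_argmin (fun _ => True) (Fp K M yd yr alpha lt mt) ph ->
  is_argmin (in_box beta) (Fl M W alpha ph mt lt) l ->
  is_argmin (fun _ => True) (Fp K M yd yr alpha l mt) p ->
  is_argmin (fun _ => True) (Fm M W alpha a b gamma p l mt) m ->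
  in_box beta l' ->
  Phi_fin K M yd yr alpha a b l p m + 2^-1 * qf Sh (col_mx l' m' - col_mx l m)
  <= Phi_fin K M yd yr alpha a b l' p' m' + 2^-1 * qf Sh (col_mx l' m' - col_mx lt mt).
Proof.
move=> ph_min l_min p_min m_min l'_box.
have coupling := smooth_coupling_ge m l' p' m' (Fp_argmin_grad p_min).
have lam_ge := lam_step_ge (symB W_sym M_sym) l_min (sGS_identity ph_min p_min) l'_box.
have mu_ge := mu_step_ge m' m_min.
have Slam_tri := qf_three_point l' l lt Slam_sym.
have Smu_tri := qf_three_point m' m mt Smu_sym.
have alphaV_ge0 : 0 <= alpha^-1 by rewrite invr_ge0 ltW.
have Slam_ge0 := mulr_ge0 alphaV_ge0 (Slam_psd (l - lt)).
have Smu_ge := ler_wpM2l alphaV_ge0 (qf_le_Smu (m - mt)).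
rewrite !Phi_finE /Sh !opp_col_mx !add_col_mx !qf_scalemx !qf_block_diag.
rewrite Slam_tri Smu_tri invfM in coupling *.
lra.
Qed.

Lemma sGS_mABCD_lam_box (lam p mu lamt pt mut ph : nat -> 'cV[R]_N) k :
  sGS_mABCD K M W yd yr alpha beta a b gamma lam p mu lamt pt mut ph ->
  in_box beta (lam 0%N) -> in_box beta (lam k).
Proof. by case=> _ _ _ iter lam0_box; case: k => [//|k]; case: (iter k.+1 isT) => _ []. Qed.

Lemma sGS_mABCD_rate (lam p mu lamt pt mut ph : nat -> 'cV[R]_N) (ls ps ms : 'cV[R]_N) :
  sGS_mABCD K M W yd yr alpha beta a b gamma lam p mu lamt pt mut ph -> in_box beta ls ->
  forall k, (1 <= k)%N ->
  Phi_fin K M yd yr alpha a b (lam k) (p k) (mu k) - Phi_fin K M yd yr alpha a b ls ps ms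
  <= 4 * (2^-1 * Snorm2 K M W alpha gamma (lam 0%N - ls) (p 0%N - ps) (mu 0%N - ms))
       / (k%:R + 1) ^+ 2.
Proof.
case=> lamt1 _ mut1 iter ls_box k k_ge1.
pose Phi j := Phi_fin K M yd yr alpha a b (lam j) (p j) (mu j).
have descent j l' p' m' : (1 <= j)%N -> in_box beta l' ->
    Phi j + 2^-1 * qf Sh (col_mx l' m' - col_mx (lam j) (mu j))
    <= Phi_fin K M yd yr alpha a b l' p' m'
       + 2^-1 * qf Sh (col_mx l' m' - col_mx (lamt j) (mut j)).
  move=> /iter [ph_min l_min p_min m_min _].
  exact: (sgs_step_descent p' m' ph_min l_min p_min m_min).
have lam_box j : (1 <= j)%N -> in_box beta (lam j) by move=> /iter [_ []].
have momentum j : (1 <= j)%N -> col_mx (lamt j.+1) (mut j.+1) =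
    col_mx (lam j) (mu j) + beta_k R j *: (col_mx (lam j) (mu j) - col_mx (lam j.-1) (mu j.-1)).
  move=> /iter [_ _ _ _ [-> _ ->]].
  by rewrite opp_col_mx add_col_mx scale_col_mx add_col_mx.
rewrite Snorm2_col_mx -add_col_mx -opp_col_mx.
apply: (fista_rate Sh_sym Sh_psd (F := Phi)
  (fun j j_ge1 => descent j.+1 _ (p j) _ isT (lam_box j j_ge1))
  (fun j j_ge1 => descent j _ ps _ j_ge1 ls_box) momentum
  (congr2 col_mx lamt1 mut1) k_ge1).
Qed.

Hypotheses (K_posdef : posdef_mx K) (a_le0 : a <= 0) (b_ge0 : 0 <= b).

(* Writing [<M yr, p> = <c, K p - M yd> + <c, M yd>] with [c = K^-1 M yr], the linear
   term is absorbed by a quarter of the first quadratic term. *)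
Lemma Phi_fin_ge : exists C0, forall l p m,
  4^-1 * qf (invmx M) (K *m p - M *m yd) + (2 * alpha)^-1 * qf M (l + m - p) - C0
  <= Phi_fin K M yd yr alpha a b l p m.
Proof.
have K_unit := posdef_unitmx K_posdef.
set c := invmx K *m (M *m yr).
exists (qf (invmx M) (M *m c) - ip c (M *m yd) + 2^-1 * qf M yd) => l p m.
set w := K *m p - M *m yd.
have linE : ip (M *m yr) p = ip c w + ip c (M *m yd).
  by rewrite -ipDr /w subrK /c [RHS]ip_mulmxl trmx_inv K_sym mulmxA (mulVmx K_unit) mul1mx.
have lin_ge : - (4^-1 * qf (invmx M) w + qf (invmx M) (M *m c)) <= ip c w.
  have := posdef_qf_ge0 (2^-1 *: w + M *m c) Minv_posdef.
  rewrite qfD // qfZ -scalemxAr ipZr ip_mulmxl M_sym mulmxA (mulmxV M_unit) mul1mx.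
  by rewrite (_ : 2^-1 ^+ 2 = 4^-1 :> R); [lra | rewrite expr2 -invfM -natrM].
have := delta_star_ge0 (M *m m) a_le0 b_ge0.
by rewrite /Phi_fin -/w linE; lra.
Qed.

Lemma Phi_fin_sublevel_bounded (U : R) : exists B, forall l p m,
  in_box beta l -> Phi_fin K M yd yr alpha a b l p m <= U ->
  forall i, [/\ `|l i ord0| <= B, `|p i ord0| <= B & `|m i ord0| <= B].
Proof.
have KMK_sym : sym_mx (K *m invmx M *m K) by exact: sym_conjmx.
have KMK_posdef : posdef_mx (K *m invmx M *m K).
  move=> x x_neq0; rewrite qf_conjmx //; apply: Minv_posdef; apply/eqP => Kx0.
  by have := K_posdef x_neq0; rewrite qfE Kx0 ip0r ltxx.
have [Cp Cp_ge0 p_coord] := posdef_coord_bound KMK_sym KMK_posdef.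
have [Cr Cr_ge0 r_coord] := posdef_coord_bound M_sym M_posdef.
have [C0 Phi_ge] := Phi_fin_ge.
set V := U + C0.
set Bp := 1 + Cp * (8 * V + 2 * qf (invmx M) (M *m yd)).
set Br := 1 + Cr * (2 * alpha * V).
exists (beta + `|Bp| + `|Br|) => l p m l_box Phi_le i.
have := Phi_ge l p m; set w := K *m p - M *m yd; set r := l + m - p => Phi_ge_lpm.
have w_ge0 := posdef_qf_ge0 w Minv_posdef.
have c_gt0 : 0 < (2 * alpha)^-1 by rewrite invr_gt0 mulr_gt0.
have r_ge0 := mulr_ge0 (ltW c_gt0) (M_psd r).
have w_le : qf (invmx M) w <= 4 * V by rewrite /V; lra.
have r_le : qf M r <= 2 * alpha * V.
  have : (2 * alpha)^-1 * qf M r <= V by rewrite /V; lra.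
  by rewrite ler_pdivrMl ?mulr_gt0.
have p_le : qf (K *m invmx M *m K) p <= 8 * V + 2 * qf (invmx M) (M *m yd).
  rewrite qf_conjmx // (_ : K *m p = w + M *m yd); last by rewrite subrK.
  by have := qfD_le w (M *m yd) Minv_sym (fun z => posdef_qf_ge0 z Minv_posdef); lra.
have pi_le : `|p i ord0| <= Bp.
  by apply: le_trans (p_coord p i) _; rewrite lerD2l ler_wpM2l.
have ri_le : `|r i ord0| <= Br.
  by apply: le_trans (r_coord r i) _; rewrite lerD2l ler_wpM2l.
have li_le : `|l i ord0| <= beta by rewrite ler_norml; apply: l_box.
have mE : m i ord0 = r i ord0 - l i ord0 + p i ord0 by rewrite !mxE; ring.
have mi_le : `|m i ord0| <= `|r i ord0| + `|l i ord0| + `|p i ord0|.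
  by rewrite mE (le_trans (ler_normD _ _)) // lerD2r ler_normB.
have Bp_le := ler_norm Bp; have Br_le := ler_norm Br.
have Bp_ge0 := normr_ge0 Bp; have Br_ge0 := normr_ge0 Br; have li_ge0 := normr_ge0 (l i ord0).
by split; lra.
Qed.

Lemma sGS_mABCD_bounded (lam p mu lamt pt mut ph : nat -> 'cV[R]_N) (ls ps ms : 'cV[R]_N) :
  sGS_mABCD K M W yd yr alpha beta a b gamma lam p mu lamt pt mut ph ->
  in_box beta (lam 0%N) -> in_box beta ls ->
  exists B, forall k (i : 'I_N),
    [/\ `|lam k i ord0| <= B, `|p k i ord0| <= B & `|mu k i ord0| <= B].
Proof.
move=> alg lam0_box ls_box.
set tau := 2^-1 * Snorm2 K M W alpha gamma (lam 0%N - ls) (p 0%N - ps) (mu 0%N - ms).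
have tau_ge0 : 0 <= tau by rewrite /tau Snorm2_col_mx mulr_ge0 ?invr_ge0 ?Sh_psd.
have [B Phi_bounded] := Phi_fin_sublevel_bounded (Num.max
  (Phi_fin K M yd yr alpha a b (lam 0%N) (p 0%N) (mu 0%N))
  (Phi_fin K M yd yr alpha a b ls ps ms + 4 * tau)).
exists B => k i; apply: Phi_bounded; first exact: sGS_mABCD_lam_box alg lam0_box.
case: k => [|k]; first by rewrite le_max lexx.
have := sGS_mABCD_rate ps ms alg ls_box (isT : (1 <= k.+1)%N); rewrite -/tau => rate_k.
have div_le : 4 * tau / (k.+1%:R + 1) ^+ 2 <= 4 * tau.
  rewrite ler_pdivrMr ?exprn_gt0 ?ltr_wpDl //; apply: ler_peMr; first exact: mulr_ge0.
  by rewrite exprn_ege1 // lerDr.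
by rewrite le_max; apply/orP; right; lra.
Qed.

End SGSStep.

Unset Implicit Arguments.

Theorem theorem3 (R : rcfType) (n N : nat) (hn : n = 2%N \/ n = 3%N)
  (K M W : 'M[R]_N) (yd yr : 'cV[R]_N) (alpha beta a b : R)
  (halpha : 0 < alpha) (hbeta : 0 < beta) (ha : a <= 0) (hb : 0 <= b)
  (hMs : sym_mx M) (hMpd : posdef_mx M)
  (hKs : sym_mx K) (hKpd : posdef_mx K)
  (hWd : diag_matrix W) (hWpos : forall i, 0 < W i i)
  (hMW : forall z, qf M z <= qf W z)
  (hWM : forall z, qf W z <= gamma_of R n * qf M z)
  (ls ps ms : 'cV[R]_N)
  (hsol_box : in_box beta ls)
  (hsol : forall l p m, in_box beta l ->
     Phi_fin K M yd yr alpha a b ls ps ms <= Phi_fin K M yd yr alpha a b l p m)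
  (lam p mu lamt pt mut ph : nat -> 'cV[R]_N)
  (hl0 : in_box beta (lam 0%N))
  (halg : sGS_mABCD K M W yd yr alpha beta a b (gamma_of R n)
            lam p mu lamt pt mut ph) :
  (forall k : nat, (1 <= k)%N ->
     Phi_fin K M yd yr alpha a b (lam k) (p k) (mu k)
       - Phi_fin K M yd yr alpha a b ls ps ms
     <= 4 * (2^-1 * Snorm2 K M W alpha (gamma_of R n)
                      (lam 0%N - ls) (p 0%N - ps) (mu 0%N - ms))
          / ((k%:R + 1) ^+ 2))
  /\ (exists B : R, forall (k : nat) (i : 'I_N),
        [/\ `|lam k i ord0| <= B, `|p k i ord0| <= B & `|mu k i ord0| <= B]).
Proof.
(* The descent inequality holds against any point with [lambda] in the box. *)
have gamma_gt0 : 0 < gamma_of R n by rewrite /gamma_of; case: ifP.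
have hWs := diag_sym hWd.
split.
  exact: (sGS_mABCD_rate halpha hMs hMpd hKs gamma_gt0 hWs hMW hWM ps ms halg hsol_box).
exact: (sGS_mABCD_bounded halpha hMs hMpd hKs gamma_gt0 hWs hMW hWM hKpd ha hb ps ms
  halg hl0 hsol_box).
Qed.
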